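(* In the setting described in the context, let $S_1(B)$ be the set of points $(x_1,x_2,x_3,y_1,y_2,y_3)\in S_0(B)$ for which there exist non-zero rationals $g$ and $\nu$ such that \[a_2x_1=\nu\{4a_1y_1-5g^2a_2y_2\}\quad\text{and}\quad a_1x_2=\nu g^3\{5a_1y_1-4g^2a_2y_2\},\] and let $S_1^*(B)$ be the set of quadruples $(x_1,x_2,y_1,y_2)$ for which there is a pair $(x_3,y_3)$ with $(x_1,x_2,x_3,y_1,y_2,y_3)\in S_1(B)$. Then \[\#S_1(B)=\#S_1^*(B)\ll B^{1/2}.\]
   Context: Let $a_1,a_2,a_3$ be non-zero square-free pairwise coprime integers, let $B\ge 2$, and let $X_1,X_2,X_3,Y_1,Y_2,Y_3$ be powers of 2 not exceeding $2B$ with $X_i^2Y_i^3\le 32B/|a_i|$ for $i=1,2,3$, and assume moreover that $B^{1/5-1/60}\le X_k\le B^{1/5+1/60}$ and $B^{1/5-1/90}\le Y_k\le B^{1/5+1/90}$ for $k=1,2,3$. Let $S_0(B)$ be the set of 6-tuples of positive integers $(x_1,x_2,x_3,y_1,y_2,y_3)$ with $\tfrac12X_i<x_i\le X_i$ and $\tfrac12Y_i<y_i\le Y_i$ ($i=1,2,3$), satisfying $a_1x_1^2y_1^3+a_2x_2^2y_2^3+a_3x_3^2y_3^3=0$, $\gcd(x_1y_1,x_2y_2,x_3y_3)=\gcd(a_1a_2a_3,x_1x_2x_3y_1y_2y_3)=1$, and with $a_1y_1,a_2y_2,a_3y_3$ square-free. The implied constant is absolute. *)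

From HB Require Import structures.
From mathcomp Require Import all_boot all_order all_algebra.
From mathcomp Require Import boolp reals exp.
Set Implicit Arguments. Unset Strict Implicit. Unset Printing Implicit Defensive.
Import Order.TTheory GRing.Theory Num.Theory.
Local Open Scope ring_scope.

Definition squarefree (n : int) : Prop :=
  n != 0 /\ forall d : nat, (d ^ 2 %| absz n)%N -> d = 1%N.

Definition is_pow2 (n : nat) : Prop := exists k : nat, n = (2 ^ k)%N.

Definition S0P (a1 a2 a3 : int) (X1 X2 X3 Y1 Y2 Y3 : nat)
    (x1 x2 x3 y1 y2 y3 : nat) : Prop :=
  [/\ [/\ (X1 < 2 * x1 <= 2 * X1)%N, (X2 < 2 * x2 <= 2 * X2)%N
         & (X3 < 2 * x3 <= 2 * X3)%N],
      [/\ (Y1 < 2 * y1 <= 2 * Y1)%N, (Y2 < 2 * y2 <= 2 * Y2)%N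
         & (Y3 < 2 * y3 <= 2 * Y3)%N] &
   [/\ a1 * (x1 ^ 2 * y1 ^ 3)%:Z + a2 * (x2 ^ 2 * y2 ^ 3)%:Z
         + a3 * (x3 ^ 2 * y3 ^ 3)%:Z = 0,
       gcdn (gcdn (x1 * y1) (x2 * y2)) (x3 * y3) = 1%N,
       gcdn (absz (a1 * a2 * a3)) (x1 * x2 * x3 * y1 * y2 * y3) = 1%N &
       [/\ squarefree (a1 * y1%:Z), squarefree (a2 * y2%:Z)
         & squarefree (a3 * y3%:Z)]]].

Definition S1P (a1 a2 a3 : int) (X1 X2 X3 Y1 Y2 Y3 : nat)
    (x1 x2 x3 y1 y2 y3 : nat) : Prop :=
  S0P a1 a2 a3 X1 X2 X3 Y1 Y2 Y3 x1 x2 x3 y1 y2 y3 /\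
  exists g nu : rat, [/\ g != 0, nu != 0,
    (a2 * x1%:Z)%:~R = nu * (4 * a1%:~R * y1%:R - 5 * g ^+ 2 * a2%:~R * y2%:R)
  & (a1 * x2%:Z)%:~R
      = nu * g ^+ 3 * (5 * a1%:~R * y1%:R - 4 * g ^+ 2 * a2%:~R * y2%:R)].

(* ambient finite type containing the dyadic box: ((((x1,x2),x3),y1),y2),y3 *)
Definition box (X1 X2 X3 Y1 Y2 Y3 : nat) : finType :=
  ('I_X1.+1 * 'I_X2.+1 * 'I_X3.+1 * 'I_Y1.+1 * 'I_Y2.+1 * 'I_Y3.+1)%type.

Definition S1set (a1 a2 a3 : int) (X1 X2 X3 Y1 Y2 Y3 : nat)
  : {set box X1 X2 X3 Y1 Y2 Y3} :=
  [set t : box X1 X2 X3 Y1 Y2 Y3 |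
    `[< S1P a1 a2 a3 X1 X2 X3 Y1 Y2 Y3
          (val t.1.1.1.1.1) (val t.1.1.1.1.2) (val t.1.1.1.2)
          (val t.1.1.2) (val t.1.2) (val t.2) >]].

Definition proj4 (X1 X2 X3 Y1 Y2 Y3 : nat) (t : box X1 X2 X3 Y1 Y2 Y3) :
  ('I_X1.+1 * 'I_X2.+1 * 'I_Y1.+1 * 'I_Y2.+1)%type :=
  (t.1.1.1.1.1, t.1.1.1.1.2, t.1.1.2, t.1.2).

Definition S1star (a1 a2 a3 : int) (X1 X2 X3 Y1 Y2 Y3 : nat) :=
  [set proj4 t | t in S1set a1 a2 a3 X1 X2 X3 Y1 Y2 Y3].

(* Write g = r/s in lowest terms and eliminate nu: the two equations defining
   S_1(B) become the integer identity
     a1 x2 s^3 (4 a1 y1 s^2 - 5 a2 y2 r^2) = a2 x1 r^3 (5 a1 y1 s^2 - 4 a2 y2 r^2).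
   At a prime p | s (so p does not divide r) the left side has valuation at
   least 3 v_p(s) + v_p(a2 y2), while on the right the factor
   5 a1 y1 s^2 - 4 a2 y2 r^2 has valuation only v_p(4 a2 y2); as a2 y2 and a2
   are squarefree and a2 is coprime to x1, this forces s^3 | 8 x1, and
   symmetrically r^3 | 8 x2.  For fixed x1, x2 and g the identity is linear in
   the coprime pair (y1, y2), so it determines y1 and y2, and x3, y3 are then
   determined by x3^2 y3^3 since y3 is squarefree.  Hence a point of S_1(B) is
   determined by (x1, s, x2, r, sign r), and as there are at most
   8X sum_s s^-3 <= 16X pairs (x, s) with x <= X and s^3 | 8x, we get
   #S_1(B) <= 512 X1 X2 <= 512 B^(2/5 + 1/30) <= 512 B^(1/2).  The determination
   of (x3, y3) by (x1, x2, y1, y2) also gives #S_1(B) = #S_1^*(B). *)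

From HB Require Import structures.
From mathcomp Require Import all_boot all_order all_algebra.
From mathcomp Require Import boolp reals exp.
From mathcomp Require Import zify ring lra.
Set Implicit Arguments. Unset Strict Implicit. Unset Printing Implicit Defensive.
Import Order.TTheory GRing.Theory Num.Theory.
Local Open Scope ring_scope.

Lemma posz_neq0 (n : nat) : (n%:Z != 0) = (0 < n)%N.
Proof. by rewrite -natz pnatr_eq0 lt0n. Qed.

Lemma pfactor_dvdz (p n : nat) (z : int) : prime p -> z != 0 ->
  ((p ^ n)%:Z %| z)%Z = (n <= logn p `|z|)%N.
Proof. by move=> p_pr z0; rewrite dvdzE /= pfactor_dvdn // absz_gt0. Qed.

Lemma lognMz (p : nat) (a b : int) : a != 0 -> b != 0 ->
  logn p `|a * b| = (logn p `|a| + logn p `|b|)%N.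
Proof. by move=> a0 b0; rewrite abszM lognM // absz_gt0. Qed.

Lemma lognXz (p n : nat) (a : int) : logn p `|a ^+ n| = (n * logn p `|a|)%N.
Proof. by rewrite abszX lognX. Qed.

Lemma logn_subz_le (p n : nat) (a b : int) : prime p ->
  ((p ^ n.+1)%:Z %| a)%Z -> b != 0 -> (logn p `|b| <= n)%N ->
  (logn p `|a - b| <= n)%N.
Proof.
move=> p_pr pa b0; have [->|ab0] := eqVneq (a - b) 0; first by rewrite logn0.
apply: contraTT; rewrite -!ltnNge -!pfactor_dvdz // => pab.
by rewrite (_ : b = a - (a - b)); [rewrite rpredB | ring].
Qed.

Lemma logn_coprime0 (p m n : nat) : prime p -> coprime m n ->
  logn p m = 0%N \/ logn p n = 0%N.
Proof.
move=> p_pr mn; have [pm|pNm] := boolP (p %| m)%N.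
  by right; apply: logn_coprime; apply: coprime_dvdl pm mn.
by left; apply: logn_coprime; rewrite prime_coprime.
Qed.

Lemma squarefree_logn (p : nat) (z : int) : prime p -> squarefree z ->
  (logn p `|z| <= 1)%N.
Proof.
move=> p_pr [z0 sqf]; rewrite leqNgt; apply/negP => vz.
have /sqf p1 : (p ^ 2 %| `|z|)%N by rewrite pfactor_dvdn // absz_gt0.
by rewrite p1 in p_pr.
Qed.

Lemma squarefreeMl (a b : int) : squarefree (a * b) -> squarefree a.
Proof.
move=> [ab0 sqf]; split; first by apply: contraNneq ab0 => ->; rewrite mul0r.
by move=> d da; apply: sqf; rewrite abszM dvdn_mulr.
Qed.

Lemma squarefreeMr (a b : int) : squarefree (a * b) -> squarefree b.
Proof. by rewrite mulrC; apply: squarefreeMl. Qed.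

(* The condition defining S_1 with nu eliminated and g = r/s cleared of
   denominators; in the application v = a1 x2, u = a2 x1, W = a1 y1 and
   w = a2 y2. *)
Definition S1_eqn (v u W w r s : int) : Prop :=
  v * s ^+ 3 * (4 * W * s ^+ 2 - 5 * w * r ^+ 2)
  = u * r ^+ 3 * (5 * W * s ^+ 2 - 4 * w * r ^+ 2).

Lemma S1_eqnC (v u W w r s : int) : S1_eqn v u W w r s -> S1_eqn u v w W s r.
Proof.
rewrite /S1_eqn => e.
rewrite (_ : _ * _ * _ = - (u * r ^+ 3 * (5 * W * s ^+ 2 - 4 * w * r ^+ 2))).
  by rewrite -e; ring.
by ring.
Qed.

Lemma clear_denominators (v u W w : int) (g nu : rat) : v != 0 -> u != 0 ->
  u%:~R = nu * (4 * W%:~R - 5 * g ^+ 2 * w%:~R) ->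
  v%:~R = nu * g ^+ 3 * (5 * W%:~R - 4 * g ^+ 2 * w%:~R) ->
  [/\ S1_eqn v u W w (numq g) (denq g),
      4 * W * denq g ^+ 2 - 5 * w * numq g ^+ 2 != 0 &
      5 * W * denq g ^+ 2 - 4 * w * numq g ^+ 2 != 0].
Proof.
move=> v0 u0 eu ev; set r := numq g; set s := denq g.
have s0 : s%:~R != 0 :> rat by rewrite intr_eq0 denq_neq0.
have rE : r%:~R = g * s%:~R :> rat.
  by rewrite -[in RHS](divq_num_den g) divfK.
have sP : (4 * W * s ^+ 2 - 5 * w * r ^+ 2)%:~R
          = s%:~R ^+ 2 * (4 * W%:~R - 5 * g ^+ 2 * w%:~R) :> rat.
  by rewrite !(rmorphB, rmorphM, rmorphXn) /= rE; ring.
have sQ : (5 * W * s ^+ 2 - 4 * w * r ^+ 2)%:~R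
          = s%:~R ^+ 2 * (5 * W%:~R - 4 * g ^+ 2 * w%:~R) :> rat.
  by rewrite !(rmorphB, rmorphM, rmorphXn) /= rE; ring.
split.
- apply: (@intr_inj rat); rewrite /S1_eqn !(rmorphM, rmorphXn) /= sP sQ rE ev eu.
  ring.
- rewrite -(intr_eq0 rat) sP mulf_neq0 ?expf_neq0 //.
  by apply: contra_neq u0 => A0; apply: (@intr_inj rat); rewrite eu A0 mulr0.
- rewrite -(intr_eq0 rat) sQ mulf_neq0 ?expf_neq0 //.
  by apply: contra_neq v0 => B0; apply: (@intr_inj rat); rewrite ev B0 mulr0.
Qed.

Section CubeDivisibility.

Variables (v c x W w r s : int).
Hypotheses (c_sqf : squarefree c) (w_sqf : squarefree w).
Hypotheses (cx : coprime `|c| `|x|) (sr : coprime `|s| `|r|) (s0 : s != 0).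
Hypothesis Q0 : 5 * W * s ^+ 2 - 4 * w * r ^+ 2 != 0.
Hypothesis eqn : S1_eqn v (c * x) W w r s.

Lemma logn_cube_le (p : nat) : prime p -> (p %| `|s|)%N -> x != 0 ->
  (3 * logn p `|s| <= logn p 8 + logn p `|x|)%N.
Proof.
move=> p_pr ps x0; set k := logn p `|s|.
have k_gt0 : (0 < k)%N by rewrite logn_gt0 mem_primes p_pr absz_gt0 s0.
have pr : coprime p `|r| := coprime_dvdl ps sr.
have vr : logn p `|r| = 0%N := logn_coprime pr.
have r0 : r != 0.
  by apply: contraTneq pr => ->; rewrite /coprime gcdn0 gtn_eqF ?prime_gt1.
have [c0 _] := c_sqf; have [w0 _] := w_sqf.
have v4 : logn p 4 = (2 * (p == 2))%N by rewrite (_ : 4 = 2 ^ 2)%N // lognX logn_prime.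
have v8 : logn p 8 = (3 * (p == 2))%N by rewrite (_ : 8 = 2 ^ 3)%N // lognX logn_prime.
(* Unless p = 2 and v_2(s) = 1 (where the bound is trivial), p^(v_p(4 w) + 1)
   divides s^2, so that v_p(5 W s^2 - 4 w r^2) = v_p(4 w). *)
have [[p2 k1]|big] : (p = 2 /\ k = 1)%N \/ ((logn p 4).+1 < 2 * k)%N.
  by rewrite v4; case: eqP; lia.
  by rewrite v8 p2 k1.
have vc := squarefree_logn p_pr c_sqf; have vw := squarefree_logn p_pr w_sqf.
have s2 (n : nat) : (n <= 2 * k)%N -> ((p ^ n)%:Z %| s ^+ 2)%Z.
  by move=> nk; rewrite pfactor_dvdz ?expf_neq0 // lognXz.
have vQ : (logn p `|(5 * W * s ^+ 2 - 4 * w * r ^+ 2)%R| <= logn p 4 + logn p `|w|)%N.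
  apply: logn_subz_le => //; first by apply/dvdz_mull/s2; lia.
    by rewrite !mulf_neq0 ?expf_neq0.
  by rewrite !lognMz ?mulf_neq0 ?expf_neq0 // vr !addn0; exact: leqnn.
have pwP : ((p ^ logn p `|w|)%:Z %| 4 * W * s ^+ 2 - 5 * w * r ^+ 2)%Z.
  apply: rpredB; first by apply/dvdz_mull/s2; lia.
  by rewrite -mulrA dvdz_mull // dvdz_mulr // pfactor_dvdz.
have : ((p ^ (3 * k + logn p `|w|))%:Z
    %| c * x * r ^+ 3 * (5 * W * s ^+ 2 - 4 * w * r ^+ 2))%Z.
  rewrite -eqn expnD PoszM -mulrA dvdz_mull // dvdz_mul //.
  by rewrite pfactor_dvdz ?expf_neq0 // lognXz.
rewrite pfactor_dvdz ?mulf_neq0 ?expf_neq0 // !lognMz ?mulf_neq0 ?expf_neq0 //.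
rewrite vr; have := logn_coprime0 p_pr cx.
move: vc vw vQ big k_gt0; rewrite v4 v8; clear; lia.
Qed.

Lemma cube_dvdn : (`|s| ^ 3 %| 8 * `|x|)%N.
Proof.
have [->|x0] := eqVneq x 0; first by rewrite muln0 dvdn0.
apply/dvdn_partP => [|p]; first by rewrite expn_gt0 absz_gt0 s0.
rewrite mem_primes => /and3P[p_pr _]; rewrite Euclid_dvdX // => /andP[ps _].
rewrite p_part pfactor_dvdn ?muln_gt0 ?absz_gt0 // lognX lognM ?absz_gt0 //.
exact: logn_cube_le.
Qed.

End CubeDivisibility.

Lemma coprime_ratio_uniq (c1 c2 : int) (m n m' n' : nat) :
  c1 != 0 -> (0 < m)%N -> coprime m n -> coprime m' n' ->
  m%:Z * c1 = n%:Z * c2 -> m'%:Z * c1 = n'%:Z * c2 -> m = m' /\ n = n'.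
Proof.
move=> c10 m_gt0 mn mn' e e'.
have /(mulIf c10)/eqP : (m * n')%N%:Z * c1 = (m' * n)%N%:Z * c1.
  by rewrite !PoszM mulrAC e [RHS]mulrAC e'; ring.
rewrite eqz_nat => /eqP mnE.
have d1 : (m %| m')%N by rewrite -(Gauss_dvdr _ mn) mulnC -mnE dvdn_mulr.
have d2 : (m' %| m)%N by rewrite -(Gauss_dvdr _ mn') mulnC mnE dvdn_mulr.
have mm' : m = m' by apply/eqP; rewrite eqn_dvd d1 d2.
by split=> //; apply/eqP; rewrite -(eqn_pmul2l m_gt0) mnE mm'.
Qed.

Lemma S1_eqn_uniq (a1 a2 v u r s : int) (y1 y2 y1' y2' : nat) :
  a1 != 0 -> a2 != 0 -> v != 0 -> r != 0 -> s != 0 ->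
  (0 < y1)%N -> (0 < y2)%N -> coprime y1 y2 -> coprime y1' y2' ->
  S1_eqn v u (a1 * y1%:Z) (a2 * y2%:Z) r s ->
  S1_eqn v u (a1 * y1'%:Z) (a2 * y2'%:Z) r s -> y1 = y1' /\ y2 = y2'.
Proof.
move=> a10 a20 v0 r0 s0 y1_gt0 y2_gt0 cy cy' e e'.
set K := v * s ^+ 3; set M := u * r ^+ 3.
have lin (m n : nat) : S1_eqn v u (a1 * m%:Z) (a2 * n%:Z) r s ->
    m%:Z * (a1 * s ^+ 2 * (4 * K - 5 * M)) = n%:Z * (a2 * r ^+ 2 * (5 * K - 4 * M)).
  rewrite /S1_eqn /K /M => emn; apply/eqP; rewrite -subr_eq0; apply/eqP.
  transitivity (v * s ^+ 3 * (4 * (a1 * m%:Z) * s ^+ 2 - 5 * (a2 * n%:Z) * r ^+ 2)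
    - u * r ^+ 3 * (5 * (a1 * m%:Z) * s ^+ 2 - 4 * (a2 * n%:Z) * r ^+ 2)).
    by ring.
  by rewrite emn subrr.
apply: coprime_ratio_uniq (lin _ _ e) (lin _ _ e') => //.
apply/eqP => c10.
have y20 : y2%:Z != 0 by rewrite posz_neq0.
have K0 : K != 0 by rewrite mulf_neq0 ?expf_neq0.
have /eqP e4 : 4 * K - 5 * M == 0.
  by move/eqP: c10; rewrite mulf_eq0 (negbTE (mulf_neq0 a10 (expf_neq0 2 s0))).
have /eqP e5 : 5 * K - 4 * M == 0.
  move: (lin _ _ e); rewrite c10 mulr0 => /esym/eqP.
  by rewrite mulf_eq0 (negbTE y20) mulf_eq0 (negbTE (mulf_neq0 a20 (expf_neq0 2 r0))).
have : 9 * K = 5 * (5 * K - 4 * M) - 4 * (4 * K - 5 * M) by ring.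
by rewrite e4 e5 !mulr0 subr0; apply/eqP; rewrite mulf_neq0.
Qed.

Lemma squarefree_gt0 (n : nat) : squarefree n%:Z -> (0 < n)%N.
Proof. by case; rewrite posz_neq0. Qed.

Lemma logn_nonprime (p n : nat) : ~~ prime p -> logn p n = 0%N.
Proof. by move=> np; rewrite lognE (negbTE np). Qed.

Lemma sqr_cube_inj (x y x' y' : nat) : (0 < x)%N -> (0 < x')%N ->
  squarefree y%:Z -> squarefree y'%:Z -> (x ^ 2 * y ^ 3 = x' ^ 2 * y' ^ 3)%N ->
  x = x' /\ y = y'.
Proof.
move=> x_gt0 x'_gt0 sy sy' e.
have y_gt0 := squarefree_gt0 sy; have y'_gt0 := squarefree_gt0 sy'.
have v p : prime p -> logn p x = logn p x' /\ logn p y = logn p y'.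
  move=> p_pr; have := congr1 (logn p) e.
  rewrite !lognM ?muln_gt0 ?expn_gt0 ?x_gt0 ?x'_gt0 ?y_gt0 ?y'_gt0 // ?lognX.
  have := squarefree_logn p_pr sy; have := squarefree_logn p_pr sy' => /=; lia.
split; apply: eqn_from_log => // p.
  by have [/v[]|np] := boolP (prime p); last by rewrite !logn_nonprime.
by have [/v[]|np] := boolP (prime p); last by rewrite !logn_nonprime.
Qed.

Section S0Facts.

Variables (a1 a2 a3 : int) (X1 X2 X3 Y1 Y2 Y3 x1 x2 x3 y1 y2 y3 : nat).
Hypothesis hS0 : S0P a1 a2 a3 X1 X2 X3 Y1 Y2 Y3 x1 x2 x3 y1 y2 y3.

Lemma S0P_x_gt0 : [/\ 0 < x1, 0 < x2 & 0 < x3]%N.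
Proof. by case: hS0 => [[/andP[? _] /andP[? _] /andP[? _]] _ _]; split; lia. Qed.

Lemma S0P_y_gt0 : [/\ 0 < y1, 0 < y2 & 0 < y3]%N.
Proof.
by case: hS0 => _ _ [_ _ _ [/squarefreeMr/squarefree_gt0 ? /squarefreeMr/squarefree_gt0 ?
  /squarefreeMr/squarefree_gt0 ?]].
Qed.

Lemma S0P_a_neq0 : [/\ a1 != 0, a2 != 0 & a3 != 0].
Proof.
by case: hS0 => _ _ [_ _ _ [/squarefreeMl[? _] /squarefreeMl[? _] /squarefreeMl[? _]]].
Qed.

Lemma S0P_coprime_ax : coprime `|a2| x1 /\ coprime `|a1| x2.
Proof.
case: hS0 => _ _ [_ _ cop _].
have ca (a : int) (x : nat) : (`|a| %| `|(a1 * a2 * a3)%R|)%N ->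
    (x %| x1 * x2 * x3 * y1 * y2 * y3)%N -> coprime `|a| x.
  by move=> da dx; apply: coprime_dvdl da (coprime_dvdr dx _); rewrite /coprime cop.
split; apply: ca; rewrite ?abszM -!mulnA.
- by rewrite dvdn_mull ?dvdn_mulr.
- exact: dvdn_mulr.
- exact: dvdn_mulr.
- by rewrite dvdn_mull ?dvdn_mulr.
Qed.

Lemma S0P_coprime_y : coprime y1 y2.
Proof.
have [y1_gt0 y2_gt0 _] := S0P_y_gt0.
case: hS0 => _ _ [e g1 g2 _].
rewrite coprime_has_primes //; apply/hasPn => p; rewrite !mem_primes.
move=> /and3P[p_pr _ py2]; apply/negP => /and3P[_ _ py1].
have p_ndvd1 : ~~ (p %| 1)%N by rewrite dvdn1 neq_ltn prime_gt1 ?orbT.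
have : (p%:Z %| a3 * (x3 ^ 2 * y3 ^ 3)%N%:Z)%Z.
  rewrite (_ : a3 * _ = - (a1 * (x1 ^ 2 * y1 ^ 3)%N%:Z + a2 * (x2 ^ 2 * y2 ^ 3)%N%:Z)).
    rewrite rpredN rpredD // dvdz_mull // dvdzE /= dvdn_mull // dvdn_exp //.
  by apply/eqP; rewrite -addr_eq0 addrC e.
rewrite dvdzE abszM /= !(Euclid_dvdM, Euclid_dvdX) // !andbT => /orP[pa3|pxy3].
  apply: (negP p_ndvd1); rewrite -g2 dvdn_gcd !abszM dvdn_mull //=.
  by apply: dvdn_trans py1 _; do 2!apply: dvdn_mulr; exact: dvdn_mull.
apply: (negP p_ndvd1); rewrite -g1 !dvdn_gcd (dvdn_mull _ py1) (dvdn_mull _ py2).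
by case/orP: pxy3 => ?; [apply: dvdn_mulr | apply: dvdn_mull].
Qed.

End S0Facts.

Lemma S0P_x3y3_uniq (a1 a2 a3 : int) (X1 X2 X3 Y1 Y2 Y3 x1 x2 x3 x3' y1 y2 y3 y3' : nat) :
  S0P a1 a2 a3 X1 X2 X3 Y1 Y2 Y3 x1 x2 x3 y1 y2 y3 ->
  S0P a1 a2 a3 X1 X2 X3 Y1 Y2 Y3 x1 x2 x3' y1 y2 y3' -> x3 = x3' /\ y3 = y3'.
Proof.
move=> h h'; have [_ _ x3_gt0] := S0P_x_gt0 h; have [_ _ x3'_gt0] := S0P_x_gt0 h'.
have [_ _ a30] := S0P_a_neq0 h.
case: h h' => _ _ [e _ _ [_ _ sq3]] [_ _ [e' _ _ [_ _ sq3']]].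
apply: sqr_cube_inj (squarefreeMr sq3) (squarefreeMr sq3') _ => //.
have : a3 * (x3 ^ 2 * y3 ^ 3)%N%:Z = a3 * (x3' ^ 2 * y3' ^ 3)%N%:Z.
  by apply: (addrI (a1 * (x1 ^ 2 * y1 ^ 3)%N%:Z + a2 * (x2 ^ 2 * y2 ^ 3)%N%:Z)); rewrite e e'.
by move/(mulfI a30) => [].
Qed.

Definition S1_cond (a1 a2 : int) (x1 x2 y1 y2 : nat) (g nu : rat) : Prop :=
  [/\ g != 0, nu != 0,
    (a2 * x1%:Z)%:~R = nu * (4 * a1%:~R * y1%:R - 5 * g ^+ 2 * a2%:~R * y2%:R)
  & (a1 * x2%:Z)%:~R
      = nu * g ^+ 3 * (5 * a1%:~R * y1%:R - 4 * g ^+ 2 * a2%:~R * y2%:R)].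

Section S1Facts.

Variables (a1 a2 a3 : int) (X1 X2 X3 Y1 Y2 Y3 x1 x2 x3 y1 y2 y3 : nat).
Variables (g nu : rat).
Hypothesis hS0 : S0P a1 a2 a3 X1 X2 X3 Y1 Y2 Y3 x1 x2 x3 y1 y2 y3.
Hypothesis hS1 : S1_cond a1 a2 x1 x2 y1 y2 g nu.

Lemma S1_cond_eqn :
  [/\ S1_eqn (a1 * x2%:Z) (a2 * x1%:Z) (a1 * y1%:Z) (a2 * y2%:Z) (numq g) (denq g),
      4 * (a1 * y1%:Z) * denq g ^+ 2 - 5 * (a2 * y2%:Z) * numq g ^+ 2 != 0 &
      5 * (a1 * y1%:Z) * denq g ^+ 2 - 4 * (a2 * y2%:Z) * numq g ^+ 2 != 0].
Proof.
have [x1_gt0 x2_gt0 _] := S0P_x_gt0 hS0.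
have [a10 a20 _] := S0P_a_neq0 hS0.
have [_ _ e1 e2] := hS1.
apply: (clear_denominators (nu := nu)); rewrite ?mulf_neq0 ?posz_neq0 //.
  by rewrite e1 !rmorphM !mulrA.
by rewrite e2 !rmorphM !mulrA.
Qed.

Lemma S1_cond_cube_dvdn :
  (`|denq g| ^ 3 %| 8 * x1)%N /\ (`|numq g| ^ 3 %| 8 * x2)%N.
Proof.
have [e P0 Q0] := S1_cond_eqn.
have [_ _ [_ _ _ [sq1 sq2 _]]] := hS0.
have [c21 c12] := S0P_coprime_ax hS0.
have [g0 _ _ _] := hS1.
split.
  apply: (cube_dvdn (x := x1%:Z)) (squarefreeMl sq2) sq2 c21 _ (denq_neq0 g) Q0 e.
  by rewrite coprime_sym coprime_num_den.
apply: (cube_dvdn (x := x2%:Z)) (squarefreeMl sq1) sq1 c12 (coprime_num_den g) _ _ (S1_eqnC e).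
  by rewrite numq_eq0.
rewrite (_ : _ - _ = - (4 * (a1 * y1%:Z) * denq g ^+ 2 - 5 * (a2 * y2%:Z) * numq g ^+ 2)).
  by rewrite oppr_eq0.
by ring.
Qed.

End S1Facts.

Lemma S1_cond_uniq (a1 a2 a3 : int) (X1 X2 X3 Y1 Y2 Y3 : nat)
    (x1 x2 x3 x3' y1 y2 y3 y1' y2' y3' : nat) (g nu nu' : rat) :
  S0P a1 a2 a3 X1 X2 X3 Y1 Y2 Y3 x1 x2 x3 y1 y2 y3 ->
  S0P a1 a2 a3 X1 X2 X3 Y1 Y2 Y3 x1 x2 x3' y1' y2' y3' ->
  S1_cond a1 a2 x1 x2 y1 y2 g nu -> S1_cond a1 a2 x1 x2 y1' y2' g nu' ->
  y1 = y1' /\ y2 = y2'.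
Proof.
move=> h h' c c'.
have [[e _ _] [e' _ _]] := (S1_cond_eqn h c, S1_cond_eqn h' c').
have [x1_gt0 x2_gt0 _] := S0P_x_gt0 h; have [y1_gt0 y2_gt0 _] := S0P_y_gt0 h.
have [a10 a20 _] := S0P_a_neq0 h; have [g0 _ _ _] := c.
apply: S1_eqn_uniq e e'; rewrite ?mulf_neq0 ?posz_neq0 ?numq_eq0 ?denq_neq0 //.
  exact: S0P_coprime_y h.
exact: S0P_coprime_y h'.
Qed.

Lemma card_le_rel (T K : finType) (A : {pred T}) (B : {pred K}) (R : T -> K -> Prop) :
  (forall t, t \in A -> exists2 k, k \in B & R t k) ->
  (forall t t' k, t \in A -> t' \in A -> R t k -> R t' k -> t = t') ->
  (#|A| <= #|B|)%N.
Proof.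
move=> exR uniqR; pose f t := [pick k in B | `[< R t k >]].
have fP t : t \in A -> exists2 k, f t = Some k & k \in B /\ R t k.
  move=> tA; rewrite /f; case: pickP => [k /andP[kB /asboolP Rk] | noR].
    by exists k.
  by have [k kB /asboolP Rk] := exR t tA; move: (noR k); rewrite kB Rk.
rewrite -(card_in_imset (f := f)); last first.
  move=> t t' tA t'A; have [k -> [_ Rk]] := fP t tA.
  by have [k' -> [_ Rk']] := fP t' t'A; case=> kk'; apply: uniqR tA t'A Rk _; rewrite kk'.
rewrite -(card_imset B Some_inj); apply: subset_leq_card.
apply/subsetP => _ /imsetP[t tA ->].
by have [k -> [kB _]] := fP t tA; apply: imset_f.
Qed.

Lemma sum_mul_le (f : nat -> nat) (m n : nat) : (0 < m)%N ->
  (\sum_(1 <= i < n.+1) f (m * i) <= \sum_(1 <= k < (m * n).+1) f k)%N.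
Proof.
move=> m_gt0; elim: n => [|n IHn]; first by rewrite !big_geq ?muln0.
have lt_mn : ((m * n).+1 <= m * n.+1)%N by rewrite mulnS; lia.
rewrite big_nat_recr //= [leqRHS](@big_cat_nat _ _ _ (m * n).+1) //=; last exact: ltnW.
by rewrite leq_add // big_nat_recr //= leq_addl.
Qed.

Lemma count_cube_dvd (m X j : nat) : (0 < m)%N ->
  ((\sum_(i < X.+1) ((0 < i) && (j ^ 3 %| m * i))) * j ^ 3 <= m * X)%N.
Proof.
move=> m_gt0; apply: leq_trans (leq_divM (m * X) (j ^ 3)).
rewrite leq_mul2r divn_count_dvd; apply/orP; right.
rewrite (_ : \sum_(i < X.+1) _ = \sum_(0 <= i < X.+1) ((0 < i) && (j ^ 3 %| m * i)))%N;
  last by rewrite big_mkord.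
rewrite big_ltn //= add0n.
apply: leq_trans (sum_mul_le (fun k => j ^ 3 %| k)%N X m_gt0).
by apply: leq_sum => i _; case: (0 < i)%N.
Qed.

Lemma sum_inv_cube_le (R : realFieldType) (N : nat) :
  \sum_(j < N) (if (0 < j)%N then (j%:R ^+ 3)^-1 else 0 : R) <= 2.
Proof.
suff bound n : \sum_(j < n.+1) (if (0 < j)%N then (j%:R ^+ 3)^-1 else 0 : R)
               <= 2 - 2 / n.+1%:R.
  case: N => [|n]; first by rewrite big_ord0.
  by apply: le_trans (bound n) _; rewrite gerBl divr_ge0.
elim: n => [|n IHn]; first by rewrite big_ord1 /= divr1 subrr.
rewrite big_ord_recr /=; apply: le_trans (lerD IHn (lexx _)) _.
set k : R := n.+1%:R; have -> : n.+2%:R = k + 1 :> R by rewrite natr1.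
have k_ge1 : 1 <= k by rewrite ler1n.
rewrite -subr_ge0; clearbody k.
have k0 : k != 0 by rewrite gt_eqF // (lt_le_trans ltr01).
have k10 : k + 1 != 0 by rewrite gt_eqF // ltr_wpDl // (le_trans ler01).
have -> : 2 - 2 / (k + 1) - (2 - 2 / k + (k ^+ 3)^-1)
          = (2 * k + 1) * (k - 1) / (k ^+ 3 * (k + 1)).
  by field; rewrite k10 k0.
by apply: divr_ge0; apply: mulr_ge0; rewrite ?exprn_ge0; lra.
Qed.

Definition cube_dvd_pairs (m X : nat) : {set 'I_X.+1 * 'I_(m * X).+1} :=
  [set p : 'I_X.+1 * 'I_(m * X).+1 | [&& 0 < p.1, 0 < p.2 & p.2 ^ 3 %| m * p.1]%N].

Lemma card_cube_dvd_pairs (m X : nat) : (0 < m)%N ->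
  (#|cube_dvd_pairs m X| <= 2 * m * X)%N.
Proof.
move=> m_gt0.
have -> : #|cube_dvd_pairs m X| = (\sum_(j < (m * X).+1)
    \sum_(i < X.+1) ((0 < j) && (0 < i) && (j ^ 3 %| m * i)))%N.
  rewrite -sum1_card big_mkcond /= exchange_big pair_big /=.
  by apply: eq_bigr => -[i j] _; rewrite inE /=; case: (0 < i)%N; case: (0 < j)%N.
rewrite -(ler_nat rat) natr_sum.
apply: le_trans (_ : \sum_(j < (m * X).+1)
  (m * X)%:R * (if (0 < j)%N then (j%:R ^+ 3)^-1 else 0) <= _).
  apply: ler_sum => j _; case: (posnP j) => [->|j_gt0].
    by rewrite mulr0 big1.
  rewrite ler_pdivlMr ?exprn_gt0 ?ltr0n // -natrX -natrM ler_nat.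
  by rewrite (leq_trans _ (count_cube_dvd X j m_gt0)).
rewrite -mulr_sumr (_ : 2 * m * X = m * X * 2)%N; last by rewrite -mulnA mulnC.
by rewrite [leRHS]natrM ler_wpM2l // sum_inv_cube_le.
Qed.

Lemma rat_eq_abs_num_den (g g' : rat) :
  `|numq g|%N = `|numq g'|%N -> `|denq g|%N = `|denq g'|%N ->
  (numq g < 0) = (numq g' < 0) -> g = g'.
Proof.
move=> en ed es; apply/eqP; rewrite rat_eqE [numq g]intEsign [numq g']intEsign en es.
by rewrite -[denq g]gez0_abs ?ltW ?denq_gt0 // -[denq g']gez0_abs ?ltW ?denq_gt0 // ed !eqxx.
Qed.

Lemma leq_cube_dvdn (s x : nat) : (0 < x)%N -> (s ^ 3 %| 8 * x)%N -> (s <= 8 * x)%N.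
Proof.
move=> x_gt0 /dvdn_leq; rewrite muln_gt0 x_gt0 => /(_ isT); apply: leq_trans.
by case: s => // s; rewrite expnS leq_pmulr // expn_gt0.
Qed.

Section S1Box.

Variables (a1 a2 a3 : int) (X1 X2 X3 Y1 Y2 Y3 : nat).
Local Notation S1 := (S1set a1 a2 a3 X1 X2 X3 Y1 Y2 Y3).

Lemma S1setP (t : box X1 X2 X3 Y1 Y2 Y3) :
  reflect (S1P a1 a2 a3 X1 X2 X3 Y1 Y2 Y3 (val t.1.1.1.1.1) (val t.1.1.1.1.2)
             (val t.1.1.1.2) (val t.1.1.2) (val t.1.2) (val t.2))
          (t \in S1).
Proof. by rewrite inE; apply: asboolP. Qed.

Lemma proj4_inj : {in S1 &, injective (@proj4 X1 X2 X3 Y1 Y2 Y3)}.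
Proof.
move=> t t' /S1setP[h _] /S1setP[h' _].
case: t h => [[[[[x1 x2] x3] y1] y2] y3] /= h.
case: t' h' => [[[[[x1' x2'] x3'] y1'] y2'] y3'] /= h'.
rewrite /proj4 /= => -[e1 e2 e4 e5]; subst x1' x2' y1' y2'.
by have [/val_inj -> /val_inj ->] := S0P_x3y3_uniq h h'.
Qed.

Lemma card_S1set_le : (#|S1| <= 512 * X1 * X2)%N.
Proof.
pose R (t : box X1 X2 X3 Y1 Y2 Y3)
       (k : 'I_X1.+1 * 'I_(8 * X1).+1 * ('I_X2.+1 * 'I_(8 * X2).+1) * bool) :=
  exists g, (exists nu, S1_cond a1 a2 (val t.1.1.1.1.1) (val t.1.1.1.1.2)
                          (val t.1.1.2) (val t.1.2) g nu) /\
  [/\ k.1.1.1 = t.1.1.1.1.1, k.1.2.1 = t.1.1.1.1.2, val k.1.1.2 = `|denq g|%N,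
      val k.1.2.2 = `|numq g|%N & k.2 = (numq g < 0)].
pose K := setX (setX (cube_dvd_pairs 8 X1) (cube_dvd_pairs 8 X2)) [set: bool].
apply: leq_trans (card_le_rel (R := R) (B := K) _ _) _.
- move=> t /S1setP[h [g [nu c]]].
  have [d1 d2] := S1_cond_cube_dvdn h c; have [x1_gt0 x2_gt0 _] := S0P_x_gt0 h.
  have bs : (`|denq g| < (8 * X1).+1)%N.
    by rewrite ltnS (leq_trans (leq_cube_dvdn x1_gt0 d1)) // leq_mul2l -ltnS ltn_ord.
  have br : (`|numq g| < (8 * X2).+1)%N.
    by rewrite ltnS (leq_trans (leq_cube_dvdn x2_gt0 d2)) // leq_mul2l -ltnS ltn_ord.
  exists (t.1.1.1.1.1, Ordinal bs, (t.1.1.1.1.2, Ordinal br), numq g < 0).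
    have [g0 _ _ _] := c.
    by rewrite !inE /= x1_gt0 x2_gt0 d1 d2 absz_gt0 denq_neq0 absz_gt0 numq_eq0 g0.
  by exists g; split; first exists nu.
- move=> t t' k tS t'S [g [[nu c] [k1 k2 ks kr kb]]] [g' [[nu' c'] [k1' k2' ks' kr' kb']]].
  have gg' : g = g' by apply: rat_eq_abs_num_den; rewrite -?kr -?ks -?kb.
  subst g'; move/S1setP: (tS) => [h _]; move/S1setP: (t'S) => [h' _].
  have e1 := etrans (esym k1) k1'; have e2 := etrans (esym k2) k2'.
  rewrite -e1 -e2 in h' c'; have [/val_inj ey1 /val_inj ey2] := S1_cond_uniq h h' c c'.
  by apply: proj4_inj => //; rewrite /proj4 e1 e2 ey1 ey2.
rewrite !cardsX cardsT card_bool (_ : 512 * X1 * X2 = 2 * 8 * X1 * (2 * 8 * X2) * 2)%N.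
  by rewrite leq_mul // leq_mul // card_cube_dvd_pairs.
by ring.
Qed.

End S1Box.

Lemma ler_pM_powR (R : realType) (B x y a b c : R) : 1 <= B -> 0 <= x -> 0 <= y ->
  x <= B `^ a -> y <= B `^ b -> a + b <= c -> x * y <= B `^ c.
Proof.
move=> B_ge1 x_ge0 y_ge0 xB yB abc; apply: le_trans (ler_pM x_ge0 y_ge0 xB yB) _.
rewrite -powRD; first exact: ler_powR.
by apply/implyP => _; rewrite gt_eqF // (lt_le_trans ltr01).
Qed.

Theorem lemma15 (R : realType) :
  exists C : R, 0 < C /\
  forall (a1 a2 a3 : int) (B : R) (X1 X2 X3 Y1 Y2 Y3 : nat),
    a1 != 0 -> a2 != 0 -> a3 != 0 ->
    squarefree a1 -> squarefree a2 -> squarefree a3 ->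
    coprimez a1 a2 -> coprimez a1 a3 -> coprimez a2 a3 ->
    2 <= B ->
    is_pow2 X1 -> is_pow2 X2 -> is_pow2 X3 ->
    is_pow2 Y1 -> is_pow2 Y2 -> is_pow2 Y3 ->
    X1%:R <= 2 * B -> X2%:R <= 2 * B -> X3%:R <= 2 * B ->
    Y1%:R <= 2 * B -> Y2%:R <= 2 * B -> Y3%:R <= 2 * B ->
    (X1 ^ 2 * Y1 ^ 3)%N%:R <= 32 * B / (absz a1)%:R ->
    (X2 ^ 2 * Y2 ^ 3)%N%:R <= 32 * B / (absz a2)%:R ->
    (X3 ^ 2 * Y3 ^ 3)%N%:R <= 32 * B / (absz a3)%:R ->
    (forall X : nat, X \in [:: X1; X2; X3] ->
       B `^ (5^-1 - 60^-1) <= X%:R /\ X%:R <= B `^ (5^-1 + 60^-1)) ->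
    (forall Y : nat, Y \in [:: Y1; Y2; Y3] ->
       B `^ (5^-1 - 90^-1) <= Y%:R /\ Y%:R <= B `^ (5^-1 + 90^-1)) ->
    #|S1set a1 a2 a3 X1 X2 X3 Y1 Y2 Y3|
      = #|S1star a1 a2 a3 X1 X2 X3 Y1 Y2 Y3| /\
    (#|S1set a1 a2 a3 X1 X2 X3 Y1 Y2 Y3|%:R <= C * B `^ (2^-1)).
Proof.
exists 512; split => // a1 a2 a3 B X1 X2 X3 Y1 Y2 Y3 _ _ _ _ _ _ _ _ _ B_ge2.
move=> _ _ _ _ _ _ _ _ _ _ _ _ _ _ _ hX _.
split; first by rewrite /S1star card_in_imset //; apply: proj4_inj.
have [_ X1_le] := hX X1 (mem_head _ _).
have X2_mem : X2 \in [:: X1; X2; X3] by rewrite !inE eqxx orbT.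
have [_ X2_le] := hX X2 X2_mem.
apply: le_trans (_ : (512 * X1 * X2)%N%:R <= _); first by rewrite ler_nat card_S1set_le.
rewrite !natrM -mulrA ler_wpM2l // (ler_pM_powR _ _ _ X1_le X2_le) //; lra.
Qed.
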